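(* Let $\sigma$ be a completely erasing $k$-block substitution with $w_\epsilon\ne1^k$ that satisfies the optimality condition. Then $f_\sigma$ is Li-Yorke chaotic. That is, there exists an uncountable set $S\subset\mathbb I$ such that for all distinct $x,y\in S$, $$\liminf_{n\to\infty}|f_\sigma^n(x)-f_\sigma^n(y)|=0\quad\text{and}\quad\limsup_{n\to\infty}|f_\sigma^n(x)-f_\sigma^n(y)|>0.$$
   Context: Notation: $\mathbb I=[0,1]$. $\{0,1\}^*$ and $\{0,1\}^\omega$ denote finite and infinite binary words, and $\epsilon$ is the empty word. For a word $w$, set $0.w=\sum_iw_i2^{-i}$. For $x\in(0,1]$, $\widetilde x$ is the unique infinite binary expansion of $x$ not ending in $0^\infty$. Fix $k\ge2$. An erasing $k$-block substitution is a map $\sigma:\{0,1\}^k\to\{0,1\}^*$ with exactly one block $w_\epsilon$ such that $\sigma(w_\epsilon)=\epsilon$. $\sigma$ is alternating if there are $\sigma_1,\dots,\sigma_k:\{0,1\}\to\{0,1\}^*$ with $\sigma(b_1\cdots b_k)=\sigma_1(b_1)\cdots\sigma_k(b_k)$. It is then extended to all finite or infinite words by $\sigma(u)=\prod_j\sigma_{((j-1)\bmod k)+1}(u_j)$. $\sigma$ is completely erasing if it is erasing and alternating, and every $w\in\{0,1\}^*$ satisfies $\sigma^n(w)=\epsilon$ for some $n\in\mathbb N$. The map $f_\sigma:\mathbb I\to\mathbb I$ is defined by $f_\sigma(x)=0.\sigma(\widetilde x)$ if $x\in(0,1]$ and $\widetilde x\neq w_\epsilon^\infty$, and $f_\sigma(x)=0$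 otherwise. Optimality condition: every $w\in\{0,1\}^\omega$ can be written as $w=\prod_{i\ge1}\sigma(b_i)$ with blocks $b_i\in\{0,1\}^k$ satisfying $\sigma(b_i)\ne\epsilon$. *)

(* Stdlib reals + Coquelicot, lists for finite words,
   nat -> bool for infinite words (0-indexed: w 0 is the first letter). *)
From Stdlib Require Import Reals List ClassicalEpsilon.
From Coquelicot Require Import Coquelicot.
Import ListNotations.
Open Scope R_scope.

Definition bin_val (w : nat -> bool) : R :=
  Series (fun i => if w i then (/ 2) ^ (S i) else 0).

(** The result may be
    finite (if almost all u_j are empty); positions beyond its end are filled
    with 0 (false), which does not change the binary value 0.(...). *)
Definition prefix_cat (u : nat -> list bool) (j : nat) : list bool :=
  concat (map u (seq 0 j)).

Definition concat_inf (u : nat -> list bool) : nat -> bool :=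
  fun p => if excluded_middle_informative
                (exists j, (p < length (prefix_cat u j))%nat /\
                           nth p (prefix_cat u j) false = true)
           then true else false.

(** x~ : the unique infinite binary expansion of x in (0,1] not ending in 0^oo
    (chosen by Hilbert's epsilon; meaningful for x in (0,1]). *)
Definition is_tilde (x : R) (w : nat -> bool) : Prop :=
  bin_val w = x /\ (forall n, exists m, (n <= m)%nat /\ w m = true).

Definition tilde (x : R) : nat -> bool :=
  epsilon (inhabits (fun _ => false)) (is_tilde x).

(** An alternating k-block substitution is given by its components
    sigma_1, ..., sigma_k, here s 0, ..., s (k-1) : bool -> list bool. *)

Definition sigma_block (k : nat) (s : nat -> bool -> list bool) (b : list bool)
  : list bool :=
  concat (map (fun i => s i (nth i b false)) (seq 0 k)).

Definition sigma_word (k : nat) (s : nat -> bool -> list bool) (u : list bool)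
  : list bool :=
  concat (map (fun j => s (j mod k)%nat (nth j u false)) (seq 0 (length u))).

Definition sigma_inf (k : nat) (s : nat -> bool -> list bool) (w : nat -> bool)
  : nat -> bool :=
  concat_inf (fun j => s (j mod k)%nat (w j)).

Definition erasing_block (k : nat) (s : nat -> bool -> list bool)
  (weps : list bool) : Prop :=
  length weps = k /\ sigma_block k s weps = [] /\
  (forall b, length b = k -> sigma_block k s b = [] -> b = weps).

Definition erasing (k : nat) (s : nat -> bool -> list bool) : Prop :=
  exists weps, erasing_block k s weps.

(** Completely erasing (alternating is built into the representation). *)
Definition completely_erasing (k : nat) (s : nat -> bool -> list bool) : Prop :=
  erasing k s /\
  forall u : list bool, exists n : nat, Nat.iter n (sigma_word k s) u = [].

Definition optimal (k : nat) (s : nat -> bool -> list bool) : Prop :=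
  forall w : nat -> bool,
    exists b : nat -> list bool,
      (forall i, length (b i) = k /\ sigma_block k s (b i) <> []) /\
      w = concat_inf (fun i => sigma_block k s (b i)).

Definition per (k : nat) (weps : list bool) : nat -> bool :=
  fun j => nth (j mod k)%nat weps false.

Definition f_sigma (k : nat) (s : nat -> bool -> list bool) (weps : list bool)
  (x : R) : R :=
  if excluded_middle_informative (0 < x <= 1 /\ tilde x <> per k weps)
  then bin_val (sigma_inf k s (tilde x))
  else 0.

Definition uncountable (S : R -> Prop) : Prop :=
  ~ exists f : nat -> R, forall x, S x -> exists n, f n = x.

From Stdlib Require Import Reals List ClassicalEpsilon Lia Arith Lra.
From Stdlib Require Import FunctionalExtensionality Cantor.
From Coquelicot Require Import Coquelicot.
Import ListNotations.

(** We build an injective family [g |-> X g] of points of [0,1], indexed by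
  [g : nat -> bool], whose pairs are scrambled under [f_sigma].  The point
  [X g] has binary expansion [seed g], an infinite concatenation of finite
  "pieces".  Piece [j] is designed backwards: by optimality every finite word
  is a prefix of a sigma-image, so we can choose piece [j] whose image after
  [schedule j] steps is a prescribed target word, and complete erasure makes
  it disappear a bounded number of steps later.  Erased earlier pieces leave
  piece [j] at the front at time [schedule j]; so the orbit of [X g] at that
  time starts with the target.  Even targets encode a bit of [g] (two leading
  1s or two leading 0s), odd targets start with [m+1] zeros for all [g].
  Hence distinct [g, g'] are 1/2-apart infinitely often and arbitrarily
  close infinitely often; [X] is injective and the family is uncountable. *)

Local Open Scope nat_scope.

(** ** Finite and infinite concatenations *)

Lemma nth_map_seq {A} (f : nat -> A) n i d : i < n -> nth i (map f (seq 0 n)) d = f i.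
Proof.
  intros H. rewrite nth_indep with (d' := f 0) by (rewrite length_map, length_seq; lia).
  rewrite map_nth, seq_nth by lia. reflexivity.
Qed.

Lemma map_seq_shift {A} (f : nat -> A) a n :
  map f (seq a n) = map (fun j => f (a + j)) (seq 0 n).
Proof.
  revert a f; induction n; intros a f; [reflexivity|].
  simpl. rewrite Nat.add_0_r. f_equal. rewrite (IHn (S a) f), (IHn 1 (fun j => f (a + j))).
  apply map_ext. intros; f_equal; lia.
Qed.

Lemma concat_nil_member {A} (l : list (list A)) x : concat l = [] -> In x l -> x = [].
Proof.
  induction l; simpl; intros H Hi; [contradiction|].
  apply app_eq_nil in H as [H1 H2]. destruct Hi; subst; auto.
Qed.

Lemma concat_map_nil {A B} (f : A -> list B) l :
  (forall x, In x l -> f x = []) -> concat (map f l) = [].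
Proof. induction l; simpl; intros H; auto. rewrite H, IHl; auto. Qed.

Lemma all_false_eq (l1 l2 : list bool) :
  length l1 = length l2 -> ~ In true l1 -> ~ In true l2 -> l1 = l2.
Proof.
  intros H H1 H2. apply nth_ext with (d := false) (d' := false); auto.
  intros n Hn. destruct (nth n l1 false) eqn:E1.
  - exfalso; apply H1. rewrite <- E1. apply nth_In; auto.
  - destruct (nth n l2 false) eqn:E2; auto. exfalso; apply H2. rewrite <- E2. apply nth_In; lia.
Qed.

Lemma nth_app_const (c : bool) x y p :
  (forall z, In z x -> z = c) -> p < length x -> nth p (x ++ y) false = c.
Proof. intros H Hp. rewrite app_nth1 by auto. apply H. apply nth_In; auto. Qed.

Lemma prefix_cat_S u j : prefix_cat u (S j) = prefix_cat u j ++ u j.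
Proof. unfold prefix_cat. rewrite seq_S, map_app, concat_app. simpl. now rewrite app_nil_r. Qed.

Lemma prefix_cat_mono u j j' : j <= j' -> exists r, prefix_cat u j' = prefix_cat u j ++ r.
Proof.
  induction 1. { exists []. now rewrite app_nil_r. }
  destruct IHle as [r Hr]. exists (r ++ u m). rewrite prefix_cat_S, Hr, app_assoc. reflexivity.
Qed.

Lemma prefix_cat_ext u u' j :
  (forall i, i < j -> u i = u' i) -> prefix_cat u j = prefix_cat u' j.
Proof.
  induction j; intros H; [reflexivity|].
  rewrite !prefix_cat_S, (H j) by lia. rewrite IHj; auto.
Qed.

Lemma prefix_cat_nil u j : (forall i, i < j -> u i = []) -> prefix_cat u j = [].
Proof. induction j; intros H; [reflexivity|]. rewrite prefix_cat_S, IHj, H; auto. Qed.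

Lemma prefix_len_ge (u : nat -> list bool) M :
  (forall i, u i <> []) -> M <= length (prefix_cat u M).
Proof.
  intros H. induction M; [simpl; lia|]. rewrite prefix_cat_S, length_app.
  specialize (H M). destruct (u M); [congruence|]. simpl; lia.
Qed.

Lemma prefix_len_unbounded u : (forall N, exists j, N <= j /\ u j <> []) ->
  forall N, exists j, N <= length (prefix_cat u j).
Proof.
  intros H N. induction N. { exists 0; lia. }
  destruct IHN as [j Hj]. destruct (H j) as [j' [Hj' Hne]].
  exists (S j'). rewrite prefix_cat_S, length_app.
  destruct (prefix_cat_mono u j j' Hj') as [r Hr]. rewrite Hr, length_app.
  destruct (u j'); [congruence|]. simpl. lia.
Qed.

Lemma concat_inf_prefix u j p : p < length (prefix_cat u j) ->
  concat_inf u p = nth p (prefix_cat u j) false.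
Proof.
  assert (Hagree : forall j j', p < length (prefix_cat u j) -> p < length (prefix_cat u j') ->
    nth p (prefix_cat u j) false = nth p (prefix_cat u j') false).
  { intros j1 j2 H1 H2. destruct (le_ge_dec j1 j2) as [h|h].
    - destruct (prefix_cat_mono u j1 j2 h) as [r Hr]. rewrite Hr, app_nth1; auto.
    - destruct (prefix_cat_mono u j2 j1 h) as [r Hr]. rewrite Hr, app_nth1; auto. }
  intros H. unfold concat_inf.
  destruct excluded_middle_informative as [[j' [H1 H2]]|n].
  - rewrite <- H2. apply Hagree; auto.
  - destruct (nth p (prefix_cat u j) false) eqn:E; auto.
    exfalso; apply n; eauto.
Qed.

Lemma concat_inf_regroup u v (g : nat -> nat) :
  (forall j, prefix_cat v j = prefix_cat u (g j)) ->
  (forall N, exists j, N <= g j) -> concat_inf v = concat_inf u.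
Proof.
  intros Hg Hunb. apply functional_extensionality. intros p. unfold concat_inf.
  destruct excluded_middle_informative as [[j [H1 H2]]|n1];
  destruct excluded_middle_informative as [[j' [H1' H2']]|n2]; auto.
  - exfalso. apply n2. exists (g j). rewrite <- Hg. auto.
  - exfalso. apply n1. destruct (Hunb j') as [j0 Hj0].
    destruct (prefix_cat_mono u j' (g j0) Hj0) as [r Hr].
    exists j0. rewrite Hg, Hr. rewrite length_app. split; [lia|].
    rewrite app_nth1; auto.
Qed.

Lemma concat_inf_trues u : (forall N, exists j, N <= j /\ In true (u j)) ->
  forall N, exists p, N <= p /\ concat_inf u p = true.
Proof.
  intros H N.
  assert (Hu : forall N, exists j, N <= length (prefix_cat u j)).
  { apply prefix_len_unbounded. intros M. destruct (H M) as [j [Hj Hi]]. exists j; split; auto.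
    intros E; rewrite E in Hi; destruct Hi. }
  destruct (Hu N) as [j0 Hj0]. destruct (H j0) as [j [Hj Hi]].
  apply In_nth with (d := false) in Hi as [q [Hq Hnq]].
  exists (length (prefix_cat u j) + q). split.
  - destruct (prefix_cat_mono u j0 j Hj) as [r Hr]. rewrite Hr, length_app. lia.
  - rewrite (concat_inf_prefix u (S j)) by (rewrite prefix_cat_S, length_app; lia).
    rewrite prefix_cat_S, app_nth2 by lia.
    now replace (length (prefix_cat u j) + q - length (prefix_cat u j)) with q by lia.
Qed.

(** ** Binary values *)

Local Open Scope R_scope.

Definition place_value (i : nat) : R := (/ 2) ^ (S i).
Definition digit_term (w : nat -> bool) (i : nat) : R := if w i then place_value i else 0.

Lemma bin_val_digits w : bin_val w = Series (digit_term w).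
Proof. reflexivity. Qed.

Lemma place_value_pos i : 0 < place_value i.
Proof. unfold place_value. apply pow_lt. lra. Qed.

Lemma is_series_place_value : is_series place_value 1.
Proof.
  assert (H : is_series (fun n => (/2) ^ n) (/ (1 - /2))).
  { apply is_series_geom. rewrite Rabs_pos_eq; lra. }
  apply (is_series_scal_l (/2)) in H.
  replace 1 with (scal (/2) (/ (1 - /2))).
  - eapply is_series_ext; [|exact H]. intros n. reflexivity.
  - unfold scal; simpl; unfold mult; simpl. field.
Qed.

Lemma digit_term_bound w i : 0 <= digit_term w i <= place_value i.
Proof. unfold digit_term. pose proof (place_value_pos i). destruct (w i); lra. Qed.

Lemma ex_series_digit_term w : ex_series (digit_term w).
Proof.
  apply (ex_series_le (digit_term w) place_value); [|exists 1; apply is_series_place_value].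
  intros n. unfold norm; simpl. unfold abs; simpl. pose proof (digit_term_bound w n).
  rewrite Rabs_pos_eq; lra.
Qed.

Lemma bin_val_bounds w : 0 <= bin_val w <= 1.
Proof.
  rewrite !bin_val_digits. split.
  - replace 0 with (Series (fun n => 0 * place_value n))
      by (rewrite (Series_scal_l 0 place_value); ring).
    apply Series_le; [|apply ex_series_digit_term].
    intros n; pose proof (digit_term_bound w n); lra.
  - rewrite <- (is_series_unique _ _ is_series_place_value).
    apply Series_le; [apply digit_term_bound|exists 1; apply is_series_place_value].
Qed.

Lemma bin_val_split w m : bin_val w =
  sum_f_R0 (digit_term w) m + (/2) ^ (S m) * bin_val (fun i => w (S m + i)%nat).
Proof.
  rewrite !bin_val_digits.
  rewrite (Series_incr_n (digit_term w) (S m)) by (lia || apply ex_series_digit_term).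
  simpl pred. f_equal. rewrite <- Series_scal_l. apply Series_ext. intros n.
  unfold digit_term, place_value. destruct (w (S m + n)%nat); [|ring].
  rewrite <- pow_add. f_equal. lia.
Qed.

Lemma bin_val_pos w p : w p = true -> 0 < bin_val w.
Proof.
  intros Hp. rewrite (bin_val_split w p).
  pose proof (bin_val_bounds (fun i => w (S p + i)%nat)).
  assert (0 <= (/2) ^ (S p)) by (apply pow_le; lra).
  assert (0 < sum_f_R0 (digit_term w) p).
  { assert (Hlast : digit_term w p = place_value p) by (unfold digit_term; now rewrite Hp).
    pose proof (place_value_pos p). destruct p as [|p]; simpl; rewrite Hlast; [lra|].
    assert (0 <= sum_f_R0 (digit_term w) p)
      by (apply cond_pos_sum; intros; apply digit_term_bound).
    lra. }
  assert (0 <= (/2) ^ (S p) * bin_val (fun i => w (S p + i)%nat)) by (apply Rmult_le_pos; lra).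
  lra.
Qed.

Lemma bin_val_small w m : (forall i, (i < m)%nat -> w i = false) -> bin_val w <= (/2) ^ m.
Proof.
  intros H. destruct m. { simpl. apply bin_val_bounds. }
  rewrite (bin_val_split w m).
  rewrite (sum_eq _ (fun _ => 0)) by (intros i Hi; unfold digit_term; rewrite H; auto with arith).
  rewrite sum_cte, Rmult_0_l, Rplus_0_l.
  pose proof (bin_val_bounds (fun i => w (S m + i)%nat)).
  assert (0 <= (/2) ^ (S m)) by (apply pow_le; lra). nra.
Qed.

Lemma bin_val_big w : w 0%nat = true -> w 1%nat = true -> 3/4 <= bin_val w.
Proof.
  intros H0 H1. rewrite (bin_val_split w 1). simpl. unfold digit_term, place_value.
  rewrite H0, H1. simpl. pose proof (bin_val_bounds (fun i => w (S (S i)))). nra.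
Qed.

Definition inf_true (w : nat -> bool) := forall N, exists p, (N <= p)%nat /\ w p = true.

Lemma bin_val_lt w w' m : (forall i, (i < m)%nat -> w i = w' i) ->
  w m = true -> w' m = false -> inf_true w -> bin_val w' < bin_val w.
Proof.
  intros Heq Hm Hm' Hinf. rewrite (bin_val_split w m), (bin_val_split w' m).
  assert (Hs : sum_f_R0 (digit_term w) m = sum_f_R0 (digit_term w') m + place_value m).
  { assert (Hlast : digit_term w m = digit_term w' m + place_value m)
      by (unfold digit_term; rewrite Hm, Hm'; ring).
    destruct m as [|m]; simpl; rewrite Hlast; [reflexivity|].
    rewrite (sum_eq (digit_term w) (digit_term w')); [ring|].
    intros i Hi. unfold digit_term. rewrite Heq by lia. reflexivity. }
  rewrite Hs. destruct (Hinf (S m)) as [p [Hp Hwp]].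
  assert (0 < bin_val (fun i => w (S m + i)%nat)).
  { apply (bin_val_pos _ (p - S m)). replace (S m + (p - S m))%nat with p by lia. auto. }
  pose proof (bin_val_bounds (fun i => w' (S m + i)%nat)).
  assert (0 < (/2) ^ (S m)) by (apply pow_lt; lra).
  unfold place_value. nra.
Qed.

Lemma bin_val_inj w w' : inf_true w -> inf_true w' -> bin_val w = bin_val w' -> w = w'.
Proof.
  intros Hw Hw' E. apply functional_extensionality. intros i.
  destruct (Bool.bool_dec (w i) (w' i)) as [Hi|Hi]; auto. exfalso.
  assert (Hmin : exists m, w m <> w' m /\ forall j, (j < m)%nat -> w j = w' j).
  { induction i as [i IH] using (well_founded_induction lt_wf).
    destruct (classic (exists j, (j < i)%nat /\ w j <> w' j)) as [[j [Hj Hj']]|Hno].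
    - exact (IH j Hj Hj').
    - exists i. split; auto. intros j Hj.
      destruct (Bool.bool_dec (w j) (w' j)); auto. exfalso; eauto. }
  destruct Hmin as [m [Hm Hb]].
  destruct (w m) eqn:E1; destruct (w' m) eqn:E2; try congruence.
  - pose proof (bin_val_lt w w' m Hb E1 E2 Hw). lra.
  - assert (Hb' : forall j, (j < m)%nat -> w' j = w j) by (intros; symmetry; auto).
    pose proof (bin_val_lt w' w m Hb' E2 E1 Hw'). lra.
Qed.

Lemma tilde_bin_val w : inf_true w -> tilde (bin_val w) = w.
Proof.
  intros Hw. unfold tilde.
  assert (Hex : exists w0, is_tilde (bin_val w) w0) by (exists w; split; [reflexivity|exact Hw]).
  destruct (epsilon_spec (inhabits (fun _ : nat => false)) (is_tilde (bin_val w)) Hex)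
    as [E Hinf].
  apply bin_val_inj; auto.
Qed.

(** ** The substitution on shifted words *)

Section Substitution.
Local Open Scope nat_scope.
Variable k : nat.
Variable s : nat -> bool -> list bool.
Variable weps : list bool.
Hypothesis Hk : 0 < k.
Hypothesis Hwl : length weps = k.
Hypothesis Hwe : sigma_block k s weps = [].

(** [sigma_from o u] applies sigma to [u] as if [u] started at position [o]
    of an infinite word: letter [j] of [u] is mapped by component [(o+j) mod k]. *)
Definition sigma_from (o : nat) (u : list bool) : list bool :=
  concat (map (fun j => s ((o + j) mod k) (nth j u false)) (seq 0 (length u))).

Lemma sigma_from_app o u v :
  sigma_from o (u ++ v) = sigma_from o u ++ sigma_from (o + length u) v.
Proof.
  unfold sigma_from. rewrite length_app, seq_app, map_app, concat_app. f_equal.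
  - f_equal. apply map_ext_in. intros j Hj. apply in_seq in Hj.
    rewrite app_nth1 by lia. reflexivity.
  - f_equal. rewrite map_seq_shift. apply map_ext. intros j. simpl.
    rewrite app_nth2 by lia. f_equal; f_equal; lia.
Qed.

Lemma sigma_from_mod o u : sigma_from o u = sigma_from (o mod k) u.
Proof.
  unfold sigma_from. f_equal. apply map_ext. intros j.
  rewrite Nat.Div0.add_mod_idemp_l. reflexivity.
Qed.

Lemma sigma_from_block b : length b = k -> sigma_from 0 b = sigma_block k s b.
Proof.
  intros Hb. unfold sigma_from, sigma_block. rewrite Hb. f_equal. apply map_ext_in.
  intros j Hj. apply in_seq in Hj. simpl. rewrite Nat.mod_small by lia. reflexivity.
Qed.

Lemma sigma_from_aligned x y :
  length x mod k = 0 -> sigma_from 0 (x ++ y) = sigma_from 0 x ++ sigma_from 0 y.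
Proof.
  intros H. rewrite sigma_from_app, (sigma_from_mod (0 + length x) y). simpl.
  rewrite H. reflexivity.
Qed.

Lemma sigma_inf_concat (u : nat -> list bool) :
  (forall N, exists j, N <= length (prefix_cat u j)) ->
  sigma_inf k s (concat_inf u) =
  concat_inf (fun j => sigma_from (length (prefix_cat u j)) (u j)).
Proof.
  intros Hunb. unfold sigma_inf. symmetry.
  apply concat_inf_regroup with (g := fun j => length (prefix_cat u j)); auto.
  intros j. transitivity (sigma_from 0 (prefix_cat u j)).
  - induction j; [reflexivity|]. rewrite !prefix_cat_S, IHj, sigma_from_app. reflexivity.
  - unfold sigma_from. unfold prefix_cat at 3. f_equal. symmetry.
    apply map_ext_in. intros p Hp. apply in_seq in Hp.
    simpl. f_equal. apply concat_inf_prefix. lia.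
Qed.

Lemma erased_letter r : r < k -> s r (nth r weps false) = [].
Proof.
  intros Hr. eapply concat_nil_member; [exact Hwe|].
  apply in_map_iff. exists r. split; auto. apply in_seq. lia.
Qed.

Definition eps_segment (o n : nat) : list bool :=
  map (fun t => nth ((o + t) mod k) weps false) (seq 0 n).

Lemma length_eps_segment o n : length (eps_segment o n) = n.
Proof. unfold eps_segment. now rewrite length_map, length_seq. Qed.

Lemma sigma_from_eps_segment o n : sigma_from o (eps_segment o n) = [].
Proof.
  unfold sigma_from. rewrite length_eps_segment. apply concat_map_nil. intros j Hj.
  apply in_seq in Hj. unfold eps_segment. rewrite nth_map_seq by lia.
  apply erased_letter. apply Nat.mod_upper_bound. lia.
Qed.

Definition eps_pad (o : nat) := eps_segment o (k - o mod k).

Lemma eps_pad_aligned o : (o + length (eps_pad o)) mod k = 0.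
Proof.
  unfold eps_pad. rewrite length_eps_segment.
  pose proof (Nat.Div0.div_mod o k). pose proof (Nat.mod_upper_bound o k ltac:(lia)).
  replace (o + (k - o mod k)) with ((o / k + 1) * k) by nia.
  apply Nat.Div0.mod_mul.
Qed.

(** The sigma-image of a list of blocks, and a preimage of it from any
    starting position [o]: pad to a block boundary, then follow each block by
    the erased block [weps]. *)
Definition blocks_image (Bs : list (list bool)) : list bool :=
  concat (map (sigma_block k s) Bs).

Lemma blocks_image_app a b : blocks_image (a ++ b) = blocks_image a ++ blocks_image b.
Proof. unfold blocks_image. now rewrite map_app, concat_app. Qed.

Lemma blocks_image_cons b Bs : blocks_image (b :: Bs) = sigma_block k s b ++ blocks_image Bs.
Proof. reflexivity. Qed.

Definition blocks_preimage (o : nat) (Bs : list (list bool)) : list bool :=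
  eps_pad o ++ concat (map (fun b => b ++ weps) Bs).

Lemma sigma_from_blocks_preimage o Bs : (forall b, In b Bs -> length b = k) ->
  sigma_from o (blocks_preimage o Bs) = blocks_image Bs.
Proof.
  intros H. unfold blocks_preimage. rewrite sigma_from_app.
  unfold eps_pad at 1. rewrite sigma_from_eps_segment. simpl.
  rewrite sigma_from_mod, eps_pad_aligned. clear o.
  induction Bs as [|b Bs IH]; [reflexivity|].
  assert (Hb : length b = k) by (apply H; left; auto).
  simpl. rewrite sigma_from_aligned.
  - rewrite sigma_from_aligned by (rewrite Hb; apply Nat.Div0.mod_same).
    rewrite (sigma_from_block b), (sigma_from_block weps), Hwe, IH
      by (auto; intros; apply H; right; auto).
    rewrite blocks_image_cons. simpl. now rewrite app_nil_r.
  - rewrite length_app, Hb, Hwl. replace (k + k) with (2 * k) by lia.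
    apply Nat.Div0.mod_mul.
Qed.

(** ** Optimal extensions and backward chains of preimages *)

Hypothesis Hopt : optimal k s.

Definition valid_blocks (Bs : list (list bool)) : Prop :=
  forall b, In b Bs -> length b = k /\ sigma_block k s b <> [].

Lemma optimal_extension o V : exists Bs n,
  valid_blocks Bs /\ blocks_image Bs = V ++ eps_segment (o + length V) n.
Proof.
  set (w := fun p => if p <? length V then nth p V false else nth ((o + p) mod k) weps false).
  destruct (Hopt w) as [b [Hb Hw]].
  set (u := fun i => sigma_block k s (b i)).
  set (M := length V).
  exists (map b (seq 0 M)).
  assert (HX : blocks_image (map b (seq 0 M)) = prefix_cat u M).
  { unfold blocks_image, prefix_cat. now rewrite map_map. }
  assert (HL : M <= length (prefix_cat u M)) by (apply prefix_len_ge; intros i; apply Hb).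
  exists (length (prefix_cat u M) - M). split.
  - intros x Hx. apply in_map_iff in Hx as [i [<- _]]. apply Hb.
  - rewrite HX. apply nth_ext with (d := false) (d' := false).
    + rewrite length_app, length_eps_segment. fold M. lia.
    + intros p Hp. rewrite <- concat_inf_prefix by exact Hp. fold u in Hw. rewrite <- Hw.
      unfold w. destruct (p <? length V) eqn:E.
      * apply Nat.ltb_lt in E. rewrite app_nth1; auto.
      * apply Nat.ltb_ge in E. rewrite app_nth2 by auto. unfold eps_segment.
        rewrite nth_map_seq by (fold M in E |- *; lia). f_equal. f_equal. lia.
Qed.

(** By optimality applied to [c^oo], some non-erased block has image in [c*]. *)
Lemma monochrome_block (c : bool) : exists B, length B = k /\
  sigma_block k s B <> [] /\ forall x, In x (sigma_block k s B) -> x = c.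
Proof.
  destruct (Hopt (fun _ => c)) as [b [Hb Hw]].
  exists (b 0). destruct (Hb 0) as [H1 H2]. split; [auto|split; [auto|]].
  intros x Hx. apply In_nth with (d := false) in Hx as [p [Hp Hn]]. rewrite <- Hn.
  assert (E : prefix_cat (fun i => sigma_block k s (b i)) 1 = sigma_block k s (b 0))
    by apply app_nil_r.
  rewrite <- E, <- concat_inf_prefix by (rewrite E; auto). rewrite <- Hw. reflexivity.
Qed.

Definition extension_blocks (o : nat) (V : list bool) : list (list bool) :=
  proj1_sig (constructive_indefinite_description _ (optimal_extension o V)).

Lemma extension_blocks_spec o V : exists n, valid_blocks (extension_blocks o V) /\
  blocks_image (extension_blocks o V) = V ++ eps_segment (o + length V) n.
Proof.
  unfold extension_blocks. destruct constructive_indefinite_description as [Bs [n H]].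
  simpl. eauto.
Qed.

Fixpoint chain_back (c : nat -> nat) (T : nat) (Q : list (list bool)) (d : nat)
  : list (list bool) :=
  match d with
  | 0 => Q
  | S d' => let o := c (T - S d') in
            extension_blocks o (blocks_preimage o (chain_back c T Q d'))
  end.

Definition chain c T Q m := chain_back c T Q (T - m).

Lemma chain_top c T Q : chain c T Q T = Q.
Proof. unfold chain. now rewrite Nat.sub_diag. Qed.

Lemma chain_step c T Q m : m < T ->
  chain c T Q m = extension_blocks (c m) (blocks_preimage (c m) (chain c T Q (S m))).
Proof.
  intros H. unfold chain. replace (T - m) with (S (T - S m)) by lia. simpl.
  replace (T - S (T - S m)) with m by lia. reflexivity.
Qed.

Lemma chain_back_valid c T Q d : valid_blocks Q -> valid_blocks (chain_back c T Q d).
Proof.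
  intros HQ. induction d as [|d IH]; simpl; auto.
  destruct (extension_blocks_spec (c (T - S d))
    (blocks_preimage (c (T - S d)) (chain_back c T Q d))) as [n [H _]]. auto.
Qed.

Lemma chain_valid c T Q m : valid_blocks Q -> valid_blocks (chain c T Q m).
Proof. apply chain_back_valid. Qed.

Lemma sigma_from_chain c T Q m : valid_blocks Q -> m < T ->
  sigma_from (c m) (blocks_image (chain c T Q m)) = blocks_image (chain c T Q (S m)).
Proof.
  intros HQ Hm. rewrite (chain_step c T Q m Hm).
  destruct (extension_blocks_spec (c m) (blocks_preimage (c m) (chain c T Q (S m))))
    as [n [_ H]].
  rewrite H, sigma_from_app, sigma_from_eps_segment, app_nil_r.
  apply sigma_from_blocks_preimage. intros b Hb. apply (chain_valid c T Q (S m) HQ b Hb).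
Qed.

(** The preimage of a nonempty valid list contains a [1]: otherwise its first
    block would equal [weps], which is erased. *)
Lemma blocks_preimage_has_one o Bs : valid_blocks Bs -> Bs <> [] ->
  In true (blocks_preimage o Bs).
Proof.
  intros HV Hne. destruct Bs as [|b Bs]; [congruence|].
  unfold blocks_preimage. apply in_or_app. right. simpl. apply in_or_app. left.
  destruct (HV b (or_introl eq_refl)) as [Hb1 Hb2].
  destruct (in_dec Bool.bool_dec true weps) as [Hw|Hw].
  - apply in_or_app; right; auto.
  - destruct (in_dec Bool.bool_dec true b) as [Hb|Hb].
    + apply in_or_app; left; auto.
    + exfalso. apply Hb2. rewrite (all_false_eq b weps); auto. lia.
Qed.

Lemma chain_back_nonempty c T Q d : valid_blocks Q -> Q <> [] -> chain_back c T Q d <> [].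
Proof.
  intros HQ HQn. induction d as [|d IH]; simpl; auto.
  set (o := c (T - S d)).
  destruct (extension_blocks_spec o (blocks_preimage o (chain_back c T Q d))) as [n [_ H]].
  pose proof (blocks_preimage_has_one o _ (chain_back_valid c T Q d HQ) IH) as H1.
  intros E. rewrite E in H.
  destruct (blocks_preimage o (chain_back c T Q d)); [contradiction|discriminate].
Qed.

Lemma chain_has_one c T Q m : valid_blocks Q -> Q <> [] -> m < T ->
  In true (blocks_image (chain c T Q m)).
Proof.
  intros HQ HQn Hm. rewrite (chain_step c T Q m Hm).
  destruct (extension_blocks_spec (c m) (blocks_preimage (c m) (chain c T Q (S m))))
    as [n [_ H]].
  rewrite H. apply in_or_app. left. apply blocks_preimage_has_one.
  - apply chain_valid; auto.
  - apply chain_back_nonempty; auto.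
Qed.

(** One application of sigma to a sequence of pieces, each piece being
    shifted by the total length of the pieces before it (cf. [sigma_inf_concat]). *)
Definition sigma_pieces (u : nat -> list bool) : nat -> list bool :=
  fun j => sigma_from (length (prefix_cat u j)) (u j).
Definition pieces_iter u n := Nat.iter n sigma_pieces u.

Definition offset u j m := length (prefix_cat (pieces_iter u m) j).

Lemma pieces_iter_local u u' j : (forall i, i <= j -> u i = u' i) ->
  forall n i, i <= j -> pieces_iter u n i = pieces_iter u' n i.
Proof.
  intros H n. induction n; intros i Hi; simpl; auto.
  unfold sigma_pieces. rewrite (prefix_cat_ext _ (pieces_iter u' n) i)
    by (intros; apply IHn; lia).
  rewrite IHn by lia. reflexivity.
Qed.

Lemma offset_local u u' j m : (forall i, i < j -> u i = u' i) -> offset u j m = offset u' j m.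
Proof.
  intros H. unfold offset. f_equal. apply prefix_cat_ext. intros i Hi.
  apply (pieces_iter_local u u' (j - 1)); [intros; apply H; lia | lia].
Qed.

(** ** Targets, erasure times and the schedule *)

Hypothesis Hce : completely_erasing k s.

Definition zero_block := proj1_sig (constructive_indefinite_description _ (monochrome_block false)).
Definition one_block := proj1_sig (constructive_indefinite_description _ (monochrome_block true)).

Lemma zero_block_spec : length zero_block = k /\ sigma_block k s zero_block <> [] /\
  forall x, In x (sigma_block k s zero_block) -> x = false.
Proof. unfold zero_block. destruct constructive_indefinite_description; auto. Qed.

Lemma one_block_spec : length one_block = k /\ sigma_block k s one_block <> [] /\
  forall x, In x (sigma_block k s one_block) -> x = true.
Proof. unfold one_block. destruct constructive_indefinite_description; auto. Qed.

(** Targets: [target_apart b] has image starting with [bb] and containing a 1;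
    [target_close m] has image starting with [m+1] zeros and containing a 1.
    Even indices carry apart targets, odd ones close targets. *)
Definition target_apart (b : bool) : list (list bool) :=
  if b then [one_block; one_block] else [zero_block; zero_block; one_block].
Definition target_close (m : nat) : list (list bool) := repeat zero_block (S m) ++ [one_block].
Definition target (j : nat) (b : bool) :=
  if Nat.even j then target_apart b else target_close (Nat.div2 j).

Lemma target_valid j b : valid_blocks (target j b).
Proof.
  destruct zero_block_spec as [Z1 [Z2 _]]. destruct one_block_spec as [O1 [O2 _]].
  intros x Hx. unfold target, target_apart, target_close in Hx.
  destruct (Nat.even j); [destruct b|]; simpl in Hx.
  - destruct Hx as [<-|[<-|[]]]; auto.
  - destruct Hx as [<-|[<-|[<-|[]]]]; auto.
  - destruct Hx as [<-|Hx]; auto. apply in_app_or in Hx as [Hx|[<-|[]]]; auto.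
    apply repeat_spec in Hx. subst; auto.
Qed.

Lemma target_nonempty j b : target j b <> [].
Proof.
  unfold target, target_apart, target_close. destruct (Nat.even j); [destruct b|]; discriminate.
Qed.

Lemma target_has_one j b : In true (blocks_image (target j b)).
Proof.
  destruct one_block_spec as [O1 [O2 O3]].
  assert (HO : In true (sigma_block k s one_block)).
  { destruct (sigma_block k s one_block) as [|x l] eqn:E; [congruence|].
    rewrite (O3 x) by (left; auto). left; auto. }
  unfold target, target_apart, target_close. destruct (Nat.even j); [destruct b|].
  - rewrite blocks_image_cons. apply in_or_app; auto.
  - rewrite !blocks_image_cons. do 2 (apply in_or_app; right). apply in_or_app; auto.
  - rewrite blocks_image_app, blocks_image_cons. apply in_or_app; right. apply in_or_app; auto.
Qed.

Definition erase_time (u : list bool) : nat :=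
  proj1_sig (constructive_indefinite_description _ (proj2 Hce u)).

Lemma erase_time_spec u d : erase_time u <= d -> Nat.iter d (sigma_word k s) u = [].
Proof.
  intros H. unfold erase_time in H.
  destruct constructive_indefinite_description as [n Hn]. simpl in H.
  replace d with ((d - n) + n) by lia. rewrite Nat.iter_add, Hn.
  induction (d - n); simpl; auto. rewrite IHn0. reflexivity.
Qed.

Definition erase_bound j :=
  Nat.max (erase_time (blocks_image (target j false))) (erase_time (blocks_image (target j true))).

Lemma erase_time_le_bound j b : erase_time (blocks_image (target j b)) <= erase_bound j.
Proof. unfold erase_bound. destruct b; lia. Qed.

(** Piece [j] reaches its target at time [schedule j] and is erased before
    [schedule (S j)]. *)
Fixpoint schedule (j : nat) : nat :=
  match j with 0 => 0 | S j' => schedule j' + erase_bound j' + 1 end.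

Lemma schedule_gap i j : i < j -> schedule i + erase_bound i < schedule j.
Proof.
  induction 1 as [|j Hij IH]; simpl; lia.
Qed.

Lemma schedule_ge j : j <= schedule j.
Proof. induction j; simpl; lia. Qed.

(** A surjection [nat -> nat] taking every value infinitely often: each
    coordinate [g i] is tested at infinitely many even stages. *)
Definition coordinate (m : nat) : nat := fst (Cantor.of_nat m).

Lemma coordinate_inf i N : exists m, N <= m /\ coordinate m = i.
Proof.
  exists (Cantor.to_nat (i, N)). split.
  - pose proof (Cantor.to_nat_non_decreasing i N). lia.
  - unfold coordinate. rewrite Cantor.cancel_of_to. reflexivity.
Qed.

(** ** The seed word attached to [g : nat -> bool] *)

Section Seed.
Variable g : nat -> bool.

Definition target_of j := target j (g (coordinate (Nat.div2 j))).

(** Piece [j] is the head of the backward chain reaching [target_of j] at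
    time [schedule j], along the offsets created by the earlier pieces.
    [pieces_upto j] lists pieces [0..j-1] (and [[]] afterwards). *)
Definition chain_head (j : nat) (c : nat -> nat) : list bool :=
  blocks_image (chain c (schedule j) (target_of j) 0).

Fixpoint pieces_upto (j : nat) : nat -> list bool :=
  match j with
  | 0 => fun _ => []
  | S j' => fun i => if i =? j' then chain_head j' (offset (pieces_upto j') j')
                    else pieces_upto j' i
  end.

Definition piece j := pieces_upto (S j) j.

Lemma pieces_upto_piece j : forall i, i < j -> pieces_upto j i = piece i.
Proof.
  induction j; intros i Hi; [lia|]. simpl.
  destruct (Nat.eqb_spec i j).
  - subst. unfold piece. simpl. now rewrite Nat.eqb_refl.
  - apply IHj. lia.
Qed.

Lemma piece_eq j : piece j = chain_head j (offset piece j).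
Proof.
  unfold piece at 1. simpl. rewrite Nat.eqb_refl. f_equal.
  apply functional_extensionality. intros m. apply offset_local. intros i Hi.
  apply pieces_upto_piece; auto.
Qed.

Definition piece_image n := pieces_iter piece n.

Lemma piece_image_chain j m : m <= schedule j ->
  piece_image m j = blocks_image (chain (offset piece j) (schedule j) (target_of j) m).
Proof.
  induction m; intros Hm.
  - unfold piece_image, pieces_iter. simpl. rewrite piece_eq. reflexivity.
  - change (piece_image (S m) j) with (sigma_from (offset piece j m) (piece_image m j)).
    rewrite IHm by lia. apply sigma_from_chain; [apply target_valid|lia].
Qed.

Lemma piece_image_target j : piece_image (schedule j) j = blocks_image (target_of j).
Proof. rewrite piece_image_chain by lia. now rewrite chain_top. Qed.

(** Piece [j] is erased from time [schedule j + erase_bound j] on: once all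
    earlier pieces are erased it sits at offset 0, where sigma acts as
    [sigma_word]. *)
Lemma piece_erased j : forall m, schedule j + erase_bound j <= m -> piece_image m j = [].
Proof.
  induction j as [j IH] using (well_founded_induction lt_wf).
  assert (Hoffset : forall m, schedule j <= m -> offset piece j m = 0).
  { intros m Hm. unfold offset. rewrite prefix_cat_nil; auto.
    intros i Hi. apply IH; auto. pose proof (schedule_gap i j Hi). lia. }
  assert (Hiter : forall d, piece_image (schedule j + d) j =
                            Nat.iter d (sigma_word k s) (blocks_image (target_of j))).
  { induction d. { rewrite Nat.add_0_r. apply piece_image_target. }
    replace (schedule j + S d) with (S (schedule j + d)) by lia.
    change (piece_image (S (schedule j + d)) j)
      with (sigma_from (offset piece j (schedule j + d)) (piece_image (schedule j + d) j)).
    rewrite IHd, Hoffset by lia. reflexivity. }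
  intros m Hm. replace m with (schedule j + (m - schedule j)) by lia. rewrite Hiter.
  apply erase_time_spec.
  pose proof (erase_time_le_bound j (g (coordinate (Nat.div2 j)))). unfold target_of. lia.
Qed.

Lemma piece_image_has_one n j : n <= schedule j -> In true (piece_image n j).
Proof.
  intros H. destruct (Nat.eq_dec n (schedule j)) as [->|Hn].
  - rewrite piece_image_target. apply target_has_one.
  - rewrite piece_image_chain by lia.
    apply chain_has_one; [apply target_valid|apply target_nonempty|lia].
Qed.

Lemma piece_image_infinitely_many n : forall N, exists j, N <= j /\ In true (piece_image n j).
Proof.
  intros N. exists (Nat.max N n). split; [lia|]. apply piece_image_has_one.
  pose proof (schedule_ge (Nat.max N n)). lia.
Qed.

Definition seed := concat_inf piece.

Lemma iter_sigma_seed n : Nat.iter n (sigma_inf k s) seed = concat_inf (piece_image n).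
Proof.
  induction n; [reflexivity|]. simpl. rewrite IHn, sigma_inf_concat; [reflexivity|].
  apply prefix_len_unbounded. intros N.
  destruct (piece_image_infinitely_many n N) as [j [Hj Hi]]. exists j; split; auto.
  intros E; rewrite E in Hi; destruct Hi.
Qed.

Lemma iter_seed_inf_true n : inf_true (Nat.iter n (sigma_inf k s) seed).
Proof.
  rewrite iter_sigma_seed. intros N.
  apply concat_inf_trues, piece_image_infinitely_many.
Qed.

Lemma iter_seed_front j p : p < length (blocks_image (target_of j)) ->
  Nat.iter (schedule j) (sigma_inf k s) seed p = nth p (blocks_image (target_of j)) false.
Proof.
  intros Hp. rewrite iter_sigma_seed.
  assert (E : prefix_cat (piece_image (schedule j)) (S j) = blocks_image (target_of j)).
  { rewrite prefix_cat_S, piece_image_target, prefix_cat_nil; auto.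
    intros i Hi. apply piece_erased. pose proof (schedule_gap i j Hi). lia. }
  rewrite (concat_inf_prefix _ (S j)) by (rewrite E; auto). now rewrite E.
Qed.

Lemma block_image_nonempty b : sigma_block k s b <> [] -> 1 <= length (sigma_block k s b).
Proof. destruct (sigma_block k s b); simpl; [congruence|lia]. Qed.

Lemma iter_seed_apart m : let w := Nat.iter (schedule (2 * m)) (sigma_inf k s) seed in
  w 0 = g (coordinate m) /\ w 1 = g (coordinate m).
Proof.
  intros w. destruct zero_block_spec as [Z1 [Z2 Z3]]. destruct one_block_spec as [O1 [O2 O3]].
  assert (HQ : target_of (2 * m) = target_apart (g (coordinate m))).
  { unfold target_of, target. rewrite Nat.even_even, Nat.div2_double. reflexivity. }
  pose proof (block_image_nonempty _ Z2). pose proof (block_image_nonempty _ O2).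
  assert (Hstart : forall p, p < 2 ->
    p < length (blocks_image (target_apart (g (coordinate m)))) /\
    nth p (blocks_image (target_apart (g (coordinate m)))) false = g (coordinate m)).
  { intros p Hp. unfold target_apart. destruct (g (coordinate m));
      rewrite !blocks_image_cons, app_assoc, !length_app; split; try lia;
      apply nth_app_const; try (rewrite length_app; lia);
      intros z Hz; apply in_app_or in Hz as [Hz|Hz]; auto. }
  unfold w. rewrite !iter_seed_front, HQ; try (rewrite HQ; apply Hstart; lia).
  split; apply Hstart; lia.
Qed.

Lemma iter_seed_close m p : p < S m ->
  Nat.iter (schedule (S (2 * m))) (sigma_inf k s) seed p = false.
Proof.
  intros Hp. destruct zero_block_spec as [Z1 [Z2 Z3]].
  assert (HQ : target_of (S (2 * m)) = target_close m).
  { unfold target_of, target. rewrite Nat.even_succ, Nat.odd_mul, Nat.div2_succ_double.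
    reflexivity. }
  pose proof (block_image_nonempty _ Z2).
  assert (Hzeros : forall n, n <= length (blocks_image (repeat zero_block n)) /\
                    forall z, In z (blocks_image (repeat zero_block n)) -> z = false).
  { induction n as [|n [A B]]; simpl. { split; [lia| intros z []]. }
    rewrite blocks_image_cons, length_app. split; [lia|].
    intros z Hz. apply in_app_or in Hz as [Hz|Hz]; auto. }
  destruct (Hzeros (S m)) as [A B].
  rewrite iter_seed_front; rewrite HQ; unfold target_close; rewrite blocks_image_app.
  - apply nth_app_const; auto; lia.
  - rewrite length_app; lia.
Qed.

End Seed.

(** ** The scrambled family *)

Lemma sigma_inf_per : sigma_inf k s (per k weps) = fun _ => false.
Proof.
  apply functional_extensionality. intros p. unfold sigma_inf, concat_inf.
  destruct excluded_middle_informative as [[j [Hj _]]|]; auto.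
  rewrite prefix_cat_nil in Hj; [simpl in Hj; lia|].
  intros i _. unfold per. apply erased_letter. apply Nat.mod_upper_bound. lia.
Qed.

Local Open Scope R_scope.

Lemma f_sigma_orbit v : (forall n, inf_true (Nat.iter n (sigma_inf k s) v)) ->
  forall n, Nat.iter n (f_sigma k s weps) (bin_val v) = bin_val (Nat.iter n (sigma_inf k s) v).
Proof.
  intros Hv n. induction n; [reflexivity|].
  simpl. rewrite IHn. set (w := Nat.iter n (sigma_inf k s) v).
  assert (Ht : tilde (bin_val w) = w) by apply tilde_bin_val, Hv.
  unfold f_sigma. destruct excluded_middle_informative as [H|H]; [now rewrite Ht|].
  exfalso. apply H. split.
  - destruct (Hv n 0%nat) as [p [_ Hp]]. split; [apply (bin_val_pos _ p Hp)|apply bin_val_bounds].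
  - rewrite Ht. intros E. destruct (Hv (S n) 0%nat) as [p [_ Hp]].
    simpl in Hp. fold w in Hp. rewrite E, sigma_inf_per in Hp. discriminate.
Qed.

Definition X g := bin_val (seed g).

Definition orbit_dist (x y : R) (n : nat) : R :=
  Rabs (Nat.iter n (f_sigma k s weps) x - Nat.iter n (f_sigma k s weps) y).

Lemma orbit_X g n :
  Nat.iter n (f_sigma k s weps) (X g) = bin_val (Nat.iter n (sigma_inf k s) (seed g)).
Proof. apply f_sigma_orbit, iter_seed_inf_true. Qed.

(** Different bits at coordinate [coordinate m] put the orbits 1/2 apart at
    time [schedule (2m)]: one value is at least 3/4, the other at most 1/4. *)
Lemma orbit_apart g g' m : g (coordinate m) <> g' (coordinate m) ->
  1/2 <= orbit_dist (X g) (X g') (schedule (2 * m)).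
Proof.
  assert (Hgap : forall h h', h (coordinate m) = true -> h' (coordinate m) = false ->
            1/2 <= orbit_dist (X h) (X h') (schedule (2 * m))).
  { intros h h' Hh Hh'. unfold orbit_dist. rewrite !orbit_X.
    destruct (iter_seed_apart h m) as [a0 a1]. destruct (iter_seed_apart h' m) as [b0 b1].
    rewrite Hh in a0, a1. rewrite Hh' in b0, b1.
    pose proof (bin_val_big _ a0 a1).
    assert (bin_val (Nat.iter (schedule (2 * m)) (sigma_inf k s) (seed h')) <= (/2) ^ 2).
    { apply bin_val_small. intros i Hi. destruct i as [|[|i]]; auto; lia. }
    rewrite Rabs_pos_eq; simpl in *; lra. }
  intros Hd. destruct (g (coordinate m)) eqn:E1; destruct (g' (coordinate m)) eqn:E2;
    try congruence.
  - apply Hgap; auto.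
  - unfold orbit_dist. rewrite Rabs_minus_sym. apply Hgap; auto.
Qed.

Lemma orbit_close g g' m : orbit_dist (X g) (X g') (schedule (S (2 * m))) <= (/2) ^ (S m).
Proof.
  unfold orbit_dist. rewrite !orbit_X.
  pose proof (bin_val_small _ (S m) (iter_seed_close g m)).
  pose proof (bin_val_small _ (S m) (iter_seed_close g' m)).
  pose proof (bin_val_bounds (Nat.iter (schedule (S (2 * m))) (sigma_inf k s) (seed g))).
  pose proof (bin_val_bounds (Nat.iter (schedule (S (2 * m))) (sigma_inf k s) (seed g'))).
  apply Rabs_le. lra.
Qed.

Lemma differ_somewhere (g g' : nat -> bool) : g <> g' -> exists i, g i <> g' i.
Proof.
  intros Hne. apply not_all_ex_not. intros H. apply Hne. apply functional_extensionality. exact H.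
Qed.

Lemma orbit_apart_often g g' : g <> g' ->
  forall N, exists n, (N <= n)%nat /\ 1/2 <= orbit_dist (X g) (X g') n.
Proof.
  intros Hne N. destruct (differ_somewhere g g' Hne) as [i Hi].
  destruct (coordinate_inf i N) as [m [Hm Hc]]. exists (schedule (2 * m)). split.
  - pose proof (schedule_ge (2 * m)). lia.
  - apply orbit_apart. now rewrite Hc.
Qed.

Lemma orbit_close_often g g' :
  forall N eps, 0 < eps -> exists n, (N <= n)%nat /\ orbit_dist (X g) (X g') n < eps.
Proof.
  intros N eps Heps.
  destruct (pow_lt_1_zero (/2) ltac:(rewrite Rabs_pos_eq; lra) eps Heps) as [N0 HN0].
  set (m := Nat.max N N0). exists (schedule (S (2 * m))). split.
  - pose proof (schedule_ge (S (2 * m))). lia.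
  - pose proof (orbit_close g g' m). specialize (HN0 (S m) ltac:(lia)).
    rewrite Rabs_pos_eq in HN0 by (apply pow_le; lra). lra.
Qed.

(** Distinct parameters give distinct points, since their orbits separate. *)
Lemma X_inj g g' : g <> g' -> X g <> X g'.
Proof.
  intros Hne E. destruct (orbit_apart_often g g' Hne 0%nat) as [n [_ H]].
  unfold orbit_dist in H. rewrite E, Rminus_diag, Rabs_R0 in H. lra.
Qed.

Lemma scrambled_family : exists X : (nat -> bool) -> R,
  (forall g, 0 <= X g <= 1) /\
  (forall g g', g <> g' -> X g <> X g') /\
  (forall g g' N eps, 0 < eps -> exists n, (N <= n)%nat /\ orbit_dist (X g) (X g') n < eps) /\
  (forall g g', g <> g' -> forall N, exists n, (N <= n)%nat /\ 1/2 <= orbit_dist (X g) (X g') n).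
Proof.
  exists X. split; [|split; [|split]].
  - intros g. apply bin_val_bounds.
  - exact X_inj.
  - exact orbit_close_often.
  - exact orbit_apart_often.
Qed.

End Substitution.

Local Open Scope R_scope.

(** Cantor's diagonal argument: an injective image of [nat -> bool] is uncountable. *)
Lemma uncountable_injective_image (X : (nat -> bool) -> R) :
  (forall g g', g <> g' -> X g <> X g') -> uncountable (fun x => exists g, x = X g).
Proof.
  intros Xinj [f Hf].
  set (G := fun n => epsilon (inhabits (fun _ : nat => false)) (fun g => f n = X g)).
  set (d := fun n => negb (G n n)).
  destruct (Hf (X d) (ex_intro _ d eq_refl)) as [n Hn].
  assert (HG : f n = X (G n)).
  { apply (epsilon_spec (inhabits (fun _ : nat => false)) (fun g => f n = X g)). eauto. }
  assert (E : G n = d).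
  { destruct (classic (G n = d)) as [h|h]; auto. exfalso. apply (Xinj _ _ h). congruence. }
  assert (Hnn : G n n = d n) by now rewrite E.
  unfold d in Hnn. destruct (G n n); discriminate.
Qed.

Lemma LimInf_seq_zero (u : nat -> R) : (forall n, 0 <= u n) ->
  (forall N eps, 0 < eps -> exists n, (N <= n)%nat /\ u n < eps) -> LimInf_seq u = 0.
Proof.
  intros Hpos Hsmall. apply is_LimInf_seq_unique. intros eps. split.
  - intros N. destruct (Hsmall N eps (cond_pos eps)) as [n [Hn Hu]]. exists n. split; auto. lra.
  - exists 0%nat. intros n _. pose proof (Hpos n). pose proof (cond_pos eps). lra.
Qed.

Lemma LimSup_seq_pos (u : nat -> R) (c : R) : 0 < c ->
  (forall N, exists n, (N <= n)%nat /\ c <= u n) -> Rbar_lt 0 (LimSup_seq u).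
Proof.
  intros Hc Hbig. destruct (ex_LimSup_seq u) as [l Hl]. rewrite (is_LimSup_seq_unique _ _ Hl).
  destruct l as [l| |]; simpl in *; auto.
  - destruct (Hl (mkposreal (c / 2) ltac:(lra))) as [_ [N HN]]. simpl in HN.
    destruct (Hbig N) as [n [Hn Hu]]. specialize (HN n Hn). lra.
  - destruct (Hl 0) as [N HN]. destruct (Hbig N) as [n [Hn Hu]]. specialize (HN n Hn). lra.
Qed.

(** The scrambled set is the image of [X]. *)
Theorem mainTheorem17 (k : nat) (s : nat -> bool -> list bool)
  (weps : list bool) :
  (2 <= k)%nat ->
  erasing_block k s weps ->
  completely_erasing k s ->
  weps <> repeat true k ->
  optimal k s ->
  exists S : R -> Prop,
    (forall x, S x -> 0 <= x <= 1) /\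
    uncountable S /\
    (forall x y, S x -> S y -> x <> y ->
       LimInf_seq (fun n => Rabs (Nat.iter n (f_sigma k s weps) x
                                  - Nat.iter n (f_sigma k s weps) y)) = Finite 0 /\
       Rbar_lt (Finite 0)
         (LimSup_seq (fun n => Rabs (Nat.iter n (f_sigma k s weps) x
                                     - Nat.iter n (f_sigma k s weps) y)))).
Proof.
  intros Hk [Hwl [Hwe _]] Hce _ Hopt.
  destruct (scrambled_family k s weps ltac:(lia) Hwl Hwe Hopt Hce)
    as [X [Xunit [Xinj [Xclose Xapart]]]].
  exists (fun x => exists g, x = X g). split; [|split].
  - intros x [g ->]. apply Xunit.
  - now apply uncountable_injective_image.
  - intros x y [g ->] [g' ->] Hxy.
    assert (Hgg : g <> g') by (intros ->; auto). split.
    + apply LimInf_seq_zero; [intros n; apply Rabs_pos|apply Xclose].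
    + apply (LimSup_seq_pos _ (1/2)); [lra|apply Xapart, Hgg].
Qed.
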